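(* For all $\mu_0\in\mathcal{P}(\mathbb{Z})$, $I_{\mathrm{DV},\overline{\mathbb{Z}}}(\mu_0)=I_{\mathrm{DV},\mathbb{Z}}(\mu_0)$.
   Context: Let $p:\mathbb{Z}\to[0,1]$ with $0<p(k)<1$ for all $k$ and limits $p_\pm=\lim_{k\to\pm\infty}p(k)\in(0,1)$. $\overline{\mathbb{Z}}=\mathbb{Z}\cup\{\pm\infty\}$ is the two-point compactification. For a Markov kernel $\Pi$ on a space $\mathcal{X}$, the Donsker–Varadhan functional is $I_\Pi(\mu)=\sup_{u\in\mathcal{U}_1(\mathcal{X})}\int\log\frac{u(x)}{\Pi u(x)}\,d\mu(x)$, where $\mathcal{U}_1(\mathcal{X})$ is the set of bounded Borel functions $u\ge1$ on $\mathcal{X}$ and $\Pi u(x)=\int u(y)\Pi(x,dy)$. $I_{\mathrm{DV},\overline{\mathbb{Z}}}$ is $I_\Pi$ on $\mathcal{P}(\overline{\mathbb{Z}})$ for the kernel on $\overline{\mathbb{Z}}$ with $\pm\infty$ absorbing and $k\to k+1$ w.p. $p(k)$, $k\to k-1$ w.p. $1-p(k)$ for $k\in\mathbb{Z}$; $I_{\mathrm{DV},\mathbb{Z}}$ is $I_\Pi$ on $\mathcal{P}(\mathbb{Z})$ for the restriction of this kernel to $\mathbb{Z}$, i.e. $I_{\mathrm{DV},\mathbb{Z}}(\nu)=\sup_{u_k\ge1}\sum_k\nu(k)\log\frac{u_k}{p(k)u_{k+1}+(1-p(k))u_{k-1}}$. $\mathcal{P}(\mathbb{Z})$ is identified with the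 measures in $\mathcal{P}(\overline{\mathbb{Z}})$ giving no mass to $\pm\infty$. *)

From HB Require Import structures.
From mathcomp Require Import all_boot all_order all_algebra.
From mathcomp Require Import all_classical all_reals all_analysis.
Set Implicit Arguments. Unset Strict Implicit. Unset Printing Implicit Defensive.
Import Order.TTheory GRing.Theory Num.Theory.
Local Open Scope classical_set_scope.
Local Open Scope ring_scope.

(* Z with its Borel sigma-algebra, i.e. the discrete one (all subsets). *)
Definition Zd : Type := int.
HB.instance Definition _ := Choice.on Zd.
HB.instance Definition _ := isPointed.Build Zd 0%R.
HB.instance Definition _ := @isMeasurable.Build default_measure_display
  Zd discrete_measurable discrete_measurable0
  discrete_measurableC discrete_measurableU.

(* The two-point compactification Zbar.  It is a countable Hausdorff space,
   so every subset is Borel: its Borel sigma-algebra is the discrete one. *)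
Inductive zbar : Type := ZFin of int | ZPinf | ZNinf.

Definition zbar_code (x : zbar) : option (option int) :=
  match x with ZFin k => Some (Some k) | ZPinf => Some None | ZNinf => None end.
Definition zbar_decode (o : option (option int)) : zbar :=
  match o with Some (Some k) => ZFin k | Some None => ZPinf | None => ZNinf end.
Lemma zbar_codeK : cancel zbar_code zbar_decode. Proof. by case. Qed.

HB.instance Definition _ := Equality.copy zbar (can_type zbar_codeK).
HB.instance Definition _ := Choice.copy zbar (can_type zbar_codeK).
HB.instance Definition _ := isPointed.Build zbar ZPinf.
HB.instance Definition _ := @isMeasurable.Build default_measure_display
  zbar discrete_measurable discrete_measurable0
  discrete_measurableC discrete_measurableU.

Lemma measurable_ZFin : measurable_fun [set: Zd] (ZFin : Zd -> zbar).
Proof. by move=> _ A _; exact: I. Qed.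

Definition U1 (R : realType) d (X : measurableType d) : set (X -> R) :=
  [set u | measurable_fun [set: X] u /\ (forall x, 1 <= u x :> R) /\
           exists M : R, forall x, u x <= M].

(* I_Pi(mu) = sup_{u in U_1(X)} \int log (u / Pi u) dmu, where the Markov
   kernel Pi is given through its action u |-> Pi u on functions. *)
Definition DV (R : realType) d (X : measurableType d)
  (Pi : (X -> R) -> X -> R) (mu : set X -> \bar R) : \bar R :=
  ereal_sup [set (\int[mu]_x (ln (u x / Pi u x))%:E)%E | u in @U1 R d X].

(* Kernel on Zbar: +-oo absorbing; k -> k+1 w.p. p k, k -> k-1 w.p. 1 - p k. *)
Definition PiZbar (R : realType) (p : int -> R) (u : zbar -> R) (x : zbar) : R :=
  match x with
  | ZFin k => p k * u (ZFin (k + 1)) + (1 - p k) * u (ZFin (k - 1))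
  | _ => u x
  end.

Definition PiZ (R : realType) (p : int -> R) (u : Zd -> R) (k : Zd) : R :=
  p k * u (k + 1 : Zd) + (1 - p k) * u (k - 1 : Zd).

Definition I_DV_Zbar (R : realType) (p : int -> R) (mu : set zbar -> \bar R) :=
  DV (PiZbar p) mu.
Definition I_DV_Z (R : realType) (p : int -> R) (mu : set Zd -> \bar R) :=
  DV (PiZ p) mu.

Definition embedZ (R : realType) (mu : set Zd -> \bar R) : set zbar -> \bar R :=
  pushforward mu (ZFin : Zd -> zbar).

From HB Require Import structures.
From mathcomp Require Import all_boot all_order all_algebra.
From mathcomp Require Import all_classical all_reals all_analysis.
From mathcomp Require Import measurable_realfun.
Set Implicit Arguments. Unset Strict Implicit. Unset Printing Implicit Defensive.
Import Order.TTheory GRing.Theory Num.Theory.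
Import numFieldTopology.Exports numFieldNormedType.Exports.
Local Open Scope classical_set_scope.
Local Open Scope ring_scope.

(* On [ZFin k] the kernel on Zbar acts through the values of [u] on Z only,
   and a measure on Z gives no mass to the two absorbing points.  Hence the
   DV integrand of [u] against the embedded measure is the DV integrand of
   the restriction [u \o ZFin]; conversely every [u] in U_1(Z) is such a
   restriction (extend it by 1 at +-oo). *)

Section integral_pushforward_measurable.
Context d1 d2 (T1 : measurableType d1) (T2 : measurableType d2) (R : realType).
Variables (phi : T1 -> T2) (mphi : measurable_fun setT phi).
Variable mu : {measure set T1 -> \bar R}.

Lemma integral_pushforward_measurable (f : T2 -> \bar R) :
  measurable_fun setT f ->
  (\int[pushforward mu phi]_y f y = \int[mu]_x f (phi x))%E.
Proof.
move=> mf; rewrite [LHS]integralE [RHS]integralE.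
rewrite !(ge0_integral_pushforward mphi) ?preimage_setT //.
- by rewrite -funepos_comp -funeneg_comp.
- exact: measurable_funeneg.
- exact: measurable_funepos.
Qed.

End integral_pushforward_measurable.

Lemma integral_embedZ (R : realType) (mu : measure Zd R) (f : zbar -> \bar R) :
  (\int[embedZ mu]_z f z = \int[mu]_k f (ZFin k))%E.
Proof.
apply: (integral_pushforward_measurable measurable_ZFin) => _ A _; exact: I.
Qed.

Lemma PiZbar_ZFin (R : realType) (p : int -> R) (u : zbar -> R) (k : Zd) :
  PiZbar p u (ZFin k) = PiZ p (u \o ZFin) k.
Proof. by []. Qed.

Lemma U1_comp_ZFin (R : realType) (u : zbar -> R) :
  U1 u -> U1 (u \o ZFin : Zd -> R).
Proof.
move=> [_ [u_ge1 [M u_leM]]]; split; first by move=> _ A _; exact: I.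
by split=> [k|]; [exact: u_ge1 | exists M => k; exact: u_leM].
Qed.

Definition extend1_zbar (R : realType) (u : Zd -> R) (z : zbar) : R :=
  if z is ZFin k then u k else 1.

Lemma extend1_zbarK (R : realType) (u : Zd -> R) : extend1_zbar u \o ZFin = u.
Proof. by []. Qed.

Lemma U1_extend1_zbar (R : realType) (u : Zd -> R) :
  U1 u -> U1 (extend1_zbar u).
Proof.
move=> [_ [u_ge1 [M u_leM]]]; have M_ge1 : 1 <= M := le_trans (u_ge1 0) (u_leM 0).
split; first by move=> _ A _; exact: I.
split=> [[k| |] /=|]; [exact: u_ge1 | by [] | by [] |].
by exists M => -[k| |] //=; exact: u_leM.
Qed.

Lemma integral_DV_embedZ (R : realType) (p : int -> R) (mu : measure Zd R)
    (u : zbar -> R) :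
  (\int[embedZ mu]_z (ln (u z / PiZbar p u z))%:E =
   \int[mu]_k (ln ((u \o ZFin) k / PiZ p (u \o ZFin) k))%:E)%E.
Proof. by rewrite integral_embedZ; apply: eq_integral => k _; rewrite PiZbar_ZFin. Qed.

Lemma DV_embedZ (R : realType) (p : int -> R) (mu : measure Zd R) :
  I_DV_Zbar p (embedZ mu) = I_DV_Z p mu.
Proof.
rewrite /I_DV_Zbar /I_DV_Z /DV; congr ereal_sup.
apply/seteqP; split=> _ [u Uu <-].
- by exists (u \o ZFin); [exact: U1_comp_ZFin | rewrite integral_DV_embedZ].
- exists (extend1_zbar u); first exact: U1_extend1_zbar.
  by rewrite integral_DV_embedZ extend1_zbarK.
Qed.

Theorem lemma3p1 (R : realType) (p : int -> R)
  (hp : forall k, 0 < p k < 1)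
  (p_plus p_minus : R) (hpp : 0 < p_plus < 1) (hpm : 0 < p_minus < 1)
  (lim_plus : (fun n : nat => p (n%:Z)) @ \oo --> p_plus)
  (lim_minus : (fun n : nat => p (- n%:Z)) @ \oo --> p_minus)
  (mu0 : probability Zd R) :
  I_DV_Zbar p (embedZ mu0) = I_DV_Z p mu0.
Proof. exact: DV_embedZ. Qed.
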